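(* Let $K(q,t)=\sum_{p\ge0}q^{2p^2}t^{2p(p-1)}(1+q^{8p+12}t^{8p+5})\prod_{j=1}^{p}\frac{1+q^{2j+4}t^{2j+1}}{1-q^{2j}t^{2j}}$, viewed as a power series in $q$ whose coefficients are polynomials in $t$. Then $K(q,-1)=\dfrac{1}{1-q^2}$ in $\mathbb{Z}[[q]]$; equivalently $\sum_{p\ge0}q^{2p^2}(1-q^{2p+2})(1-q^{2p+4})(1-q^{8p+12})=1-q^4$. *)

From HB Require Import structures.
From mathcomp Require Import all_boot all_order all_algebra.
Set Implicit Arguments. Unset Strict Implicit. Unset Printing Implicit Defensive.
Import Order.TTheory GRing.Theory Num.Theory.
Local Open Scope ring_scope.

(* R[[q]] : coefficient n is the coefficient of q^n *)
Definition fps (R : nzRingType) := nat -> R.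

Section FPS.
Variable R : nzRingType.

Definition fps_one : fps R := fun n => (n == 0%N)%:R.
Definition fps_mon (a : nat) (c : R) : fps R := fun n => if n == a then c else 0.
Definition fps_add (f g : fps R) : fps R := fun n => f n + g n.
Definition fps_opp (f : fps R) : fps R := fun n => - f n.
Definition fps_mul (f g : fps R) : fps R :=
  fun n => \sum_(i < n.+1) f i * g (n - i)%N.
Definition fps_exp (f : fps R) (k : nat) : fps R := iter k (fps_mul f) fps_one.

(* 1/(1 - f) = \sum_k f^k, for f with zero constant term (then only the
   terms k <= n contribute to the coefficient of q^n). *)
Definition fps_inv1m (f : fps R) : fps R :=
  fun n => \sum_(k < n.+1) fps_exp f k n.

(* q-adically convergent sum \sum_{p >= 0} F p, for a family with
   valuation (F p) >= p (so only p <= n contribute to the coefficient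
   of q^n). *)
Definition fps_sum (F : nat -> fps R) : fps R :=
  fun n => \sum_(p < n.+1) F p n.

End FPS.

Definition fps_map (R S : nzRingType) (phi : R -> S) (f : fps R) : fps S :=
  fun n => phi (f n).

(* The series K(q,t) in Z[t][[q]], coefficient ring {poly int} (variable t). *)
Definition t_pow (k : nat) : {poly int} := 'X^k.

Definition K_factor (j : nat) : fps {poly int} :=
  fps_mul (fps_add (fps_one _) (fps_mon (2 * j + 4) (t_pow (2 * j + 1))))
          (fps_inv1m (fps_mon (2 * j) (t_pow (2 * j)))).

Definition K_term (p : nat) : fps {poly int} :=
  fps_mul (fps_mon (2 * p ^ 2) (t_pow (2 * p * (p - 1))))
   (fps_mul (fps_add (fps_one _) (fps_mon (8 * p + 12) (t_pow (8 * p + 5))))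
      (\big[@fps_mul _/fps_one _]_(1 <= j < p.+1) K_factor j)).

Definition K : fps {poly int} := fps_sum K_term.

Definition K_at_minus1 : fps int := fps_map (fun P : {poly int} => P.[-1]) K.

From HB Require Import structures.
From mathcomp Require Import all_boot all_order all_algebra.
From mathcomp Require Import zify ring.
Import Order.TTheory GRing.Theory Num.Theory.
Set Implicit Arguments. Unset Strict Implicit. Unset Printing Implicit Defensive.
Local Open Scope ring_scope.

(* Writing x = q^2, at t = -1 the
   p-th term of K becomes
       x^(p^2) (1 - x^(4p+6)) prod_(j=1..p) (1 - x^(j+2)) / (1 - x^j),
   whose product telescopes to (1 - x^(p+1))(1 - x^(p+2)) / ((1 - x)(1 - x^2)).
   After clearing the denominators (1 - x)(1 - x^2), which are invertible
   modulo q^(N+1), the claim reduces to the polynomial identity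
       sum_(p<M) x^(p^2)(1-x^(p+1))(1-x^(p+2))(1-x^(4p+6)) = 1 - x^2 - x^(M^2) r,
   proved by telescoping; the error term x^(M^2) r vanishes modulo q^(N+1). *)

Section Truncation.
Variables (R : nzRingType) (N : nat).

Definition approx (f : fps R) (P : {poly R}) := forall m, (m <= N)%N -> f m = P`_m.

Lemma approx_one : approx (fps_one R) 1.
Proof. by move=> m _; rewrite coef1. Qed.

Lemma approx_mon a c : approx (fps_mon a c) (c%:P * 'X^a).
Proof.
move=> m _; rewrite coefCM coefXn /fps_mon.
by case: eqP => _; rewrite ?mulr1 ?mulr0.
Qed.

Lemma approx_add f g P Q : approx f P -> approx g Q -> approx (fps_add f g) (P + Q).
Proof. by move=> hf hg m hm; rewrite coefD /fps_add hf // hg. Qed.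

(* The Cauchy product in degree m only involves degrees <= m. *)
Lemma approx_mul f g P Q : approx f P -> approx g Q -> approx (fps_mul f g) (P * Q).
Proof.
move=> hf hg m hm; rewrite coefM /fps_mul; apply: eq_bigr => i _.
have hi := ltn_ord i; rewrite hf ?hg //; lia.
Qed.

Lemma approx_exp f P k : approx f P -> approx (fps_exp f k) (P ^+ k).
Proof.
move=> hf; elim: k => [|k IH]; first exact: approx_one.
by rewrite exprS /fps_exp iterS; apply: approx_mul.
Qed.

Lemma approx_prod (F : nat -> fps R) (P : nat -> {poly R}) a b :
  (forall j, (a <= j < b)%N -> approx (F j) (P j)) ->
  approx (\big[@fps_mul _/fps_one _]_(a <= j < b) F j) (\prod_(a <= j < b) P j).
Proof.
move=> hF; rewrite big_nat_cond [X in approx _ X]big_nat_cond.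
apply: (big_ind2 approx); first exact: approx_one.
  by move=> *; apply: approx_mul.
by move=> i /andP[h _]; apply: hF.
Qed.

Lemma coef_exp_small (P : {poly R}) k m : P`_0 = 0 -> (m < k)%N -> (P ^+ k)`_m = 0.
Proof.
move=> P0; elim: k m => [//|k IH] m hm.
rewrite exprS coefM big1 // => -[[|i] hi] _ /=; first by rewrite P0 mul0r.
rewrite IH ?mulr0 //; lia.
Qed.

Lemma sum_extend (F : nat -> R) m : (m <= N)%N ->
  (forall k, (m < k)%N -> F k = 0) ->
  \sum_(k < m.+1) F k = \sum_(k < N.+1) F k.
Proof.
move=> hm hF; rewrite -!(big_mkord xpredT) [RHS](big_cat_nat _ (n := m.+1)) //=.
rewrite [X in _ + X]big1_seq ?addr0 // => k /andP[_].
by rewrite mem_index_iota => /andP[hk _]; apply: hF.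
Qed.

Lemma approx_inv1m f P : approx f P -> P`_0 = 0 ->
  approx (fps_inv1m f) (\sum_(k < N.+1) P ^+ k).
Proof.
move=> hf P0 m hm; rewrite coef_sum /fps_inv1m.
under eq_bigr do rewrite (approx_exp _ hf) //.
by rewrite (@sum_extend (fun k => (P ^+ k)`_m) m hm) // => k; apply: coef_exp_small.
Qed.

Lemma approx_sum (F : nat -> fps R) (P : nat -> {poly R}) :
  (forall p, approx (F p) (P p)) -> (forall p m, (m < p)%N -> F p m = 0) ->
  approx (fps_sum F) (\sum_(p < N.+1) P p).
Proof.
move=> hF hval m hm; rewrite coef_sum /fps_sum.
under eq_bigr do rewrite hF //.
by rewrite (@sum_extend (fun p => (P p)`_m) m hm) // => p hp; rewrite -hF ?hval.
Qed.

End Truncation.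

Lemma approx_map (R S : nzRingType) (phi : R -> S) N f P : phi 0 = 0 ->
  approx N f P -> approx N (fps_map phi f) (map_poly phi P).
Proof. by move=> phi0 hf m hm; rewrite coef_map_id0 // /fps_map hf. Qed.

Section Congruence.
Variables (R : nzRingType) (N : nat).

Definition eqmod (P Q : {poly R}) := forall m, (m <= N)%N -> P`_m = Q`_m.

Lemma eqmod_refl P : eqmod P P. Proof. by []. Qed.
Lemma eqmod_eq P Q : P = Q -> eqmod P Q. Proof. by move=> ->. Qed.
Lemma eqmod_sym P Q : eqmod P Q -> eqmod Q P.
Proof. by move=> h m hm; rewrite h. Qed.
Lemma eqmod_trans P Q T : eqmod P Q -> eqmod Q T -> eqmod P T.
Proof. by move=> h1 h2 m hm; rewrite h1 // h2. Qed.

Lemma eqmod_add P P' Q Q' : eqmod P P' -> eqmod Q Q' -> eqmod (P + Q) (P' + Q').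
Proof. by move=> h1 h2 m hm; rewrite !coefD h1 // h2. Qed.

Lemma eqmod_mul P P' Q Q' : eqmod P P' -> eqmod Q Q' -> eqmod (P * Q) (P' * Q').
Proof.
move=> h1 h2 m hm; rewrite !coefM; apply: eq_bigr => i _.
have hi := ltn_ord i; rewrite h1 ?h2 //; lia.
Qed.

Lemma eqmod_sum (I : finType) (F G : I -> {poly R}) :
  (forall i, eqmod (F i) (G i)) -> eqmod (\sum_i F i) (\sum_i G i).
Proof.
move=> h; apply: (big_ind2 eqmod) => [|*|i _]; [exact: eqmod_refl | | exact: h].
exact: eqmod_add.
Qed.

Lemma eqmod_subhigh P k Q : (N < k)%N -> eqmod (P - 'X^k * Q) P.
Proof.
move=> hk m hm; rewrite coefB coefXnM; case: ifP => [_|]; first by rewrite subr0.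
lia.
Qed.

End Congruence.

Section Geometric.
Variables (R : comNzRingType) (N : nat).

(* x = q^2, and the truncated inverse of 1 - x^j. *)
Definition q2 : {poly R} := 'X^2.
Definition geo (j : nat) : {poly R} := \sum_(k < N.+1) (q2 ^+ j) ^+ k.

Lemma geo_id (y : {poly R}) n : (1 - y) * \sum_(k < n) y ^+ k = 1 - y ^+ n.
Proof.
elim: n => [|n IH]; first by rewrite big_ord0 mulr0 expr0 subrr.
by rewrite big_ord_recr /= mulrDr IH exprSr; ring.
Qed.

(* geo j inverts 1 - x^j modulo q^(N+1), since x^(j(N+1)) vanishes there. *)
Lemma geo_inv j : (0 < j)%N -> eqmod N ((1 - q2 ^+ j) * geo j) 1.
Proof.
move=> hj; rewrite /geo geo_id /q2 -!exprM -[X in _ - X]mulr1.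
apply: eqmod_subhigh; nia.
Qed.

Lemma eqmod_cancel P Q j : (0 < j)%N ->
  eqmod N (P * (1 - q2 ^+ j)) (Q * (1 - q2 ^+ j)) -> eqmod N P Q.
Proof.
move=> hj h.
have unit_right U : eqmod N (U * ((1 - q2 ^+ j) * geo j)) U.
  by rewrite -[X in eqmod _ _ X]mulr1; apply: eqmod_mul (eqmod_refl _) (geo_inv hj).
apply: eqmod_trans (eqmod_sym (unit_right P)) _.
apply: eqmod_trans (unit_right Q).
by rewrite !mulrA; apply: eqmod_mul h (eqmod_refl _).
Qed.

Lemma prod_telescope p :
  eqmod N (\prod_(1 <= j < p.+1) ((1 - q2 ^+ j.+2) * geo j) * ((1 - q2) * (1 - q2 ^+ 2)))
          ((1 - q2 ^+ p.+1) * (1 - q2 ^+ p.+2)).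
Proof.
elim: p => [|p IH]; first by rewrite big_geq // mul1r expr1.
rewrite big_nat_recr //=.
set P := \prod_(1 <= j < p.+1) _.
apply: (@eqmod_trans _ _ _ ((P * ((1 - q2) * (1 - q2 ^+ 2))) * ((1 - q2 ^+ p.+3) * geo p.+1))).
  by apply: eqmod_eq; ring.
apply: eqmod_trans (eqmod_mul IH (eqmod_refl _)) _.
apply: (@eqmod_trans _ _ _ (((1 - q2 ^+ p.+1) * geo p.+1) * ((1 - q2 ^+ p.+2) * (1 - q2 ^+ p.+3)))).
  by apply: eqmod_eq; ring.
by rewrite -[X in eqmod _ _ X]mul1r; apply: eqmod_mul (geo_inv _) (eqmod_refl _).
Qed.

End Geometric.
Arguments q2 {R}.
Arguments geo {R} N j.

Section TermIdentity.
Variable R : comNzRingType.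

(* The cofactor r(x, y) of the error term g(M) = x^(M^2) r(x, x^M). *)
Definition tail (x y : R) : R :=
  1 + y ^+ 2 * x + y ^+ 4 * x ^+ 4 + y ^+ 2 * x ^+ 3
    - y * x * (1 + x) - y ^+ 3 * x ^+ 3 * (1 + x).

Lemma summand_telescopes (x : R) p :
  x ^+ (p ^ 2) * (1 - x ^+ p.+1) * (1 - x ^+ p.+2) * (1 - x ^+ (4 * p + 6))
  = x ^+ (p ^ 2) * tail x (x ^+ p) - x ^+ (p.+1 ^ 2) * tail x (x ^+ p.+1).
Proof.
have -> : (p.+1 ^ 2 = p ^ 2 + p * 2 + 1)%N by lia.
have -> : (4 * p + 6 = p * 4 + 6)%N by lia.
rewrite /tail !exprD !exprM !exprS expr0; ring.
Qed.

(* sum_(p<M) x^(p^2)(1-x^(p+1))(1-x^(p+2))(1-x^(4p+6)) = g(0) - g(M),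
   and g(0) = r(x, 1) = 1 - x^2. *)
Lemma partial_sum_identity (x : R) M :
  \sum_(p < M) x ^+ (p ^ 2) * (1 - x ^+ p.+1) * (1 - x ^+ p.+2) * (1 - x ^+ (4 * p + 6))
  = 1 - x ^+ 2 - x ^+ (M ^ 2) * tail x (x ^+ M).
Proof.
set g := fun p => x ^+ (p ^ 2) * tail x (x ^+ p).
have g0 : g 0%N = 1 - x ^+ 2 by rewrite /g /tail expr0 !expr1n; ring.
have := @telescope_sumr_eq _ 0 M (fun p => - g p)
  (fun p => x ^+ (p ^ 2) * (1 - x ^+ p.+1) * (1 - x ^+ p.+2) * (1 - x ^+ (4 * p + 6))).
rewrite big_mkord g0 opprK addrC => -> // p _.
by rewrite summand_telescopes opprK addrC.
Qed.

End TermIdentity.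

Lemma main_congruence (R : comNzRingType) N :
  eqmod N (\sum_(p < N.+1) q2 ^+ (p ^ 2) * ((1 - q2 ^+ (4 * p + 6)) *
             \prod_(1 <= j < p.+1) ((1 - q2 ^+ j.+2) * @geo R N j)))
          (geo N 1).
Proof.
(* Multiply both sides by (1 - x)(1 - x^2); the right side becomes 1 - x^2. *)
apply: (@eqmod_cancel _ _ _ _ 1) => //; apply: (@eqmod_cancel _ _ _ _ 2) => //.
apply: (@eqmod_trans _ _ _ (1 - q2 ^+ 2)); last first.
  apply: (@eqmod_trans _ _ _ (((1 - q2 ^+ 1) * geo N 1) * (1 - q2 ^+ 2))).
    by rewrite -[X in eqmod _ X _]mul1r; apply: eqmod_mul (eqmod_sym (geo_inv _ _)) (eqmod_refl _).
  by apply: eqmod_eq; ring.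
(* On the left, each product telescopes, leaving the summands of
   [partial_sum_identity]. *)
rewrite !mulr_suml.
apply: (@eqmod_trans _ _ _ (\sum_(p < N.+1) q2 ^+ (p ^ 2) * (1 - q2 ^+ p.+1)
          * (1 - q2 ^+ p.+2) * (1 - q2 ^+ (4 * p + 6)))).
  apply: eqmod_sum => p; set P := \prod_(1 <= j < p.+1) _.
  apply: (@eqmod_trans _ _ _ (q2 ^+ (p ^ 2) * (1 - q2 ^+ (4 * p + 6)) *
           (P * ((1 - q2) * (1 - q2 ^+ 2))))).
    by apply: eqmod_eq; rewrite expr1; ring.
  apply: eqmod_trans (eqmod_mul (eqmod_refl _) (prod_telescope _ _)) _.
  by apply: eqmod_eq; ring.
rewrite partial_sum_identity.
have -> : q2 ^+ (N.+1 ^ 2) = 'X^(2 * N.+1 ^ 2) :> {poly R} by rewrite exprM.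
apply: eqmod_subhigh; nia.
Qed.

Definition K_factor_trunc (n j : nat) : {poly {poly int}} :=
  (1 + (t_pow (2 * j + 1))%:P * 'X^(2 * j + 4)) *
  \sum_(k < n.+1) ((t_pow (2 * j))%:P * 'X^(2 * j)) ^+ k.

Definition K_term_trunc (n p : nat) : {poly {poly int}} :=
  ((t_pow (2 * p * (p - 1)))%:P * 'X^(2 * p ^ 2)) *
  ((1 + (t_pow (8 * p + 5))%:P * 'X^(8 * p + 12)) *
   \prod_(1 <= j < p.+1) K_factor_trunc n j).

Lemma approx_K_term n p : approx n (K_term p) (K_term_trunc n p).
Proof.
apply: approx_mul; first exact: approx_mon.
apply: approx_mul; first by apply: approx_add; [exact: approx_one | exact: approx_mon].
apply: approx_prod => j /andP[hj _].
apply: approx_mul; first by apply: approx_add; [exact: approx_one | exact: approx_mon].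
apply: approx_inv1m; first exact: approx_mon.
by rewrite coefCM coefXn; case: eqP => [|_]; [lia | rewrite mulr0].
Qed.

(* The p-th term of K is divisible by q^(2p^2), in particular by q^p. *)
Lemma K_term_valuation p m : (m < p)%N -> K_term p m = 0.
Proof.
move=> hm; rewrite /K_term /fps_mul big1 // => -[i hi] _ /=.
by rewrite /fps_mon; case: eqP => [e|_]; [nia | rewrite mul0r].
Qed.

Lemma approx_K n : approx n K (\sum_(p < n.+1) K_term_trunc n p).
Proof. by apply: approx_sum => [p|]; [exact: approx_K_term | exact: K_term_valuation]. Qed.

Local Notation at_minus1 := (map_poly (horner_eval (-1 : int))).

Lemma t_pow_even k : (t_pow (2 * k)).[-1] = 1.
Proof. by rewrite hornerXn exprM sqrrN !expr1n. Qed.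

Lemma t_pow_odd k : (t_pow (2 * k + 1)).[-1] = -1.
Proof. by rewrite hornerXn exprD exprM sqrrN !expr1n mul1r expr1. Qed.

Lemma mon_at_minus1 (c : {poly int}) a : at_minus1 (c%:P * 'X^a) = (c.[-1])%:P * 'X^a.
Proof. by rewrite rmorphM /= map_polyC map_polyXn. Qed.

Lemma q2_pow k : 'X^(2 * k) = (@q2 int) ^+ k.
Proof. by rewrite /q2 -exprM. Qed.

Lemma K_factor_at_minus1 n j :
  at_minus1 (K_factor_trunc n j) = (1 - q2 ^+ j.+2) * geo n j.
Proof.
rewrite rmorphM /= rmorphD /= rmorph1 mon_at_minus1 t_pow_odd polyCN polyC1 mulN1r.
rewrite (_ : (2 * j + 4 = 2 * j.+2)%N) ?q2_pow; last by lia.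
rewrite rmorph_sum /= /geo; congr (_ * _); apply: eq_bigr => k _.
by rewrite rmorphXn /= mon_at_minus1 t_pow_even polyC1 mul1r q2_pow.
Qed.

Lemma K_term_at_minus1 n p :
  at_minus1 (K_term_trunc n p) = q2 ^+ (p ^ 2) * ((1 - q2 ^+ (4 * p + 6)) *
    \prod_(1 <= j < p.+1) ((1 - q2 ^+ j.+2) * geo n j)).
Proof.
rewrite rmorphM /= mon_at_minus1 -mulnA t_pow_even polyC1 mul1r q2_pow.
rewrite rmorphM /= rmorphD /= rmorph1 mon_at_minus1 rmorph_prod /=.
rewrite (_ : (8 * p + 5 = 2 * (4 * p + 2) + 1)%N) ?t_pow_odd; last by lia.
rewrite (_ : (8 * p + 12 = 2 * (4 * p + 6))%N) ?q2_pow; last by lia.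
rewrite polyCN polyC1 mulN1r; congr (_ * (_ * _)).
by apply: eq_bigr => j _; rewrite K_factor_at_minus1.
Qed.

Theorem mainTheorem12 :
  forall n : nat, K_at_minus1 n = fps_inv1m (fps_mon 2 (1 : int)) n.
Proof.
move=> n.
have approx_Km1 : approx n K_at_minus1 (at_minus1 (\sum_(p < n.+1) K_term_trunc n p)).
  by apply: approx_map; [exact: horner0 | exact: approx_K].
have approx_geo : approx n (fps_inv1m (fps_mon 2 (1 : int))) (geo n 1).
  rewrite /geo /q2 expr1 -[X in \sum_(k < _) X ^+ _]mul1r -polyC1.
  by apply: approx_inv1m; [exact: approx_mon | rewrite coefCM coefXn mulr0].
have K_at_minus1_trunc :
    eqmod n (at_minus1 (\sum_(p < n.+1) K_term_trunc n p)) (geo n 1).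
  apply: eqmod_trans _ (@main_congruence int n).
  by apply: eqmod_eq; rewrite rmorph_sum; apply: eq_bigr => p _; apply: K_term_at_minus1.
by rewrite approx_Km1 // approx_geo // K_at_minus1_trunc.
Qed.
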